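(* With $J(p_0,p_1)$ as in the context, for $p_0,p_1\in X_\infty$ the set $J(p_0,p_1)$ is nonempty if and only if $p_0\ne p_1$. In particular $\hat d_\infty$ is a metric on $X_\infty$.
   Context: Standing construction ($n=2$). Fix an integer $L\ge100$, $m=4$, $m_v=3L$. For $j\in\mathbb Z$, $Y_j$ is the cell complex on $\mathbb R^2$ given by the tiling by rectangles $[am^{-j},(a+1)m^{-j}]\times[bm_v^{-j},(b+1)m_v^{-j}]$, $a,b\in\mathbb Z$. Let $\Phi(x,y)=(m^{-1}x,m_v^{-1}y)$. For $k,\ell\in\mathbb Z$, $i\in\{1,2,3\}$, $a_{k,\ell,i}=\{k+\tfrac i4\}\times[(3\ell+i-1)m_v^{-1},(3\ell+i)m_v^{-1}]$. $\mathcal R$ is the equivalence relation on $\mathbb R^2$ generated by $p\sim p+(0,m_v^{-1})$ for $p\in a_{k,\ell,i}$. $\Phi^j_*\mathcal R=\{(\Phi^jp,\Phi^jq):(p,q)\in\mathcal R\}$; $\mathcal R_j$ is generated by $\Phi^i_*\mathcal R$, $i<j$; $\mathcal R_\infty$ by all. For $j\in\mathbb Z\cup\{\infty\}$, $X_j=\mathbb R^2/\mathcal R_j$, $\hat\pi^j$ the quotient map, $\pi_j^\infty:X_j\to X_\infty$ the induced map; $X_j$ has the CW structure whose open cells are images of open cells of $Y_j$. $\hat d_\infty$ is the largest pseudodistance on $X_\infty$ such that for every $i\in\mathbb Z$ and every $2$-cell $\hat\sigma$ of $Y_i$, $\hat\pi^\infty(\hat\sigma)$ has diameter $\le m^{-i}$.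 For $p_0,p_1\in X_\infty$, $J(p_0,p_1)$ is the set of $j\in\mathbb Z$ such that there are no intersecting $2$-cells $\sigma_0,\sigma_1$ of $X_j$ with $\sigma_i\cap(\pi_j^\infty)^{-1}(p_i)\ne\emptyset$ for $i=0,1$. *)

From Stdlib Require Import Reals ZArith Relations.Relation_Operators.
Open Scope R_scope.

Definition R2 : Type := (R * R)%type.

Definition m : R := 4.
Definition mv (L : nat) : R := 3 * INR L.

Definition Phi_pow (L : nat) (j : Z) (p : R2) : R2 :=
  (powerRZ m (- j) * fst p, powerRZ (mv L) (- j) * snd p).

(* the closed rectangle [a m^{-j},(a+1)m^{-j}] x [b mv^{-j},(b+1)mv^{-j}],
   a 2-cell of Y_j *)
Definition in_cell (L : nat) (j a b : Z) (p : R2) : Prop :=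
  IZR a * powerRZ m (- j) <= fst p <= (IZR a + 1) * powerRZ m (- j) /\
  IZR b * powerRZ (mv L) (- j) <= snd p <= (IZR b + 1) * powerRZ (mv L) (- j).

Definition in_a (L : nat) (k l i : Z) (p : R2) : Prop :=
  fst p = IZR k + IZR i / 4 /\
  (3 * IZR l + IZR i - 1) / mv L <= snd p <= (3 * IZR l + IZR i) / mv L.

Definition gen0 (L : nat) (p q : R2) : Prop :=
  exists k l i : Z, (1 <= i <= 3)%Z /\ in_a L k l i p /\
    q = (fst p, snd p + / mv L).

Definition Rel (L : nat) : R2 -> R2 -> Prop := clos_refl_sym_trans R2 (gen0 L).

Definition push (L : nat) (i : Z) (P Q : R2) : Prop :=
  exists p q, Rel L p q /\ P = Phi_pow L i p /\ Q = Phi_pow L i q.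

Definition Rj (L : nat) (j : Z) : R2 -> R2 -> Prop :=
  clos_refl_sym_trans R2 (fun P Q => exists i : Z, (i < j)%Z /\ push L i P Q).

Definition Rinf (L : nat) : R2 -> R2 -> Prop :=
  clos_refl_sym_trans R2 (fun P Q => exists i : Z, push L i P Q).

(* Points of X_j = R^2 / R_j are represented by points of R^2.
   J(p0,p1): j such that there are no intersecting 2-cells sigma_0, sigma_1
   of X_j (images of closed cells of Y_j) with sigma_i meeting the fibre
   (pi_j^infty)^{-1}(p_i). *)
Definition inJ (L : nat) (p0 p1 : R2) (j : Z) : Prop :=
  ~ (exists a0 b0 a1 b1 : Z,
       (exists x y, in_cell L j a0 b0 x /\ in_cell L j a1 b1 y /\ Rj L j x y) /\
       (exists z, in_cell L j a0 b0 z /\ Rinf L z p0) /\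
       (exists w, in_cell L j a1 b1 w /\ Rinf L w p1)).

(* A pseudodistance on X_infinity, given on representatives *)
Definition pseudodist_Xinf (L : nat) (d : R2 -> R2 -> R) : Prop :=
  (forall p p' q q', Rinf L p p' -> Rinf L q q' -> d p q = d p' q') /\
  (forall p q, 0 <= d p q) /\
  (forall p, d p p = 0) /\
  (forall p q, d p q = d q p) /\
  (forall p q r, d p r <= d p q + d q r).

Definition admissible (L : nat) (d : R2 -> R2 -> R) : Prop :=
  pseudodist_Xinf L d /\
  (forall (i a b : Z) (x y : R2), in_cell L i a b x -> in_cell L i a b y ->
     d x y <= powerRZ m (- i)).

Definition is_dhat_inf (L : nat) (d : R2 -> R2 -> R) : Prop :=
  admissible L d /\
  (forall d', admissible L d' -> forall p q, d' p q <= d p q).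

From Stdlib Require Import Reals ZArith Lia Lra.
From Stdlib Require Import Relations.Relation_Operators Classical ClassicalEpsilon.
Open Scope R_scope.

(* If p0 and p1 are R_infinity-equivalent, no j lies in J(p0, p1): take the same
   cell of X_j twice.  Conversely, for inequivalent points we build an admissible
   pseudodistance d with d p0 p1 > 0; as d p0 p1 <= 2 m^-j whenever j is not in
   J(p0, p1), J(p0, p1) is nonempty, and as d <= hat d_infinity, the latter is a
   metric.  It exists as the supremum of all admissible pseudodistances, which is
   finite since any two points lie in large cells containing the origin.

   The separating d has the form |f u - f v| / C, with f invariant under R_infinity
   and varying by at most C m^-i on the cells of Y_i.  If the abscissae differ, f is
   the abscissa (gluings are vertical).  Otherwise f starts from a bump supported
   near the common vertical line whose profile in y distinguishes the two points and
   is invariant under the gluings of all levels below K.  The gluings of level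
   K, K+1, ... are then taken into account one at a time by corrections near the
   corresponding gluing lines; the correction at level K + n has size
   O((5/m_v)^n m_v^-K), and since m_v = 3L is much larger than m = 4 they sum to a
   perturbation smaller than the bump, with the required control on the cells. *)

Lemma Rabs_le_inv x y : Rabs x <= y -> - y <= x <= y.
Proof. unfold Rabs; destruct (Rcase_abs x); intros; lra. Qed.

Lemma Int_part_spec r : IZR (Int_part r) <= r < IZR (Int_part r) + 1.
Proof. destruct (base_Int_part r); lra. Qed.

Lemma Int_part_unique z r : IZR z <= r < IZR z + 1 -> Int_part r = z.
Proof.
  intros [H1 H2]; unfold Int_part.
  assert (up r = (z + 1)%Z) by (symmetry; apply tech_up; rewrite plus_IZR; lra).
  lia.
Qed.

Lemma Int_part_le_compat a b : a <= b -> (Int_part a <= Int_part b)%Z.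
Proof.
  intros H; destruct (Int_part_spec a), (Int_part_spec b).
  apply Z.nlt_ge; intros Hlt.
  assert (Hle : IZR (Int_part b + 1) <= IZR (Int_part a)) by (apply IZR_le; lia).
  rewrite plus_IZR in Hle; lra.
Qed.

Lemma Int_part_add_IZR r z : Int_part (r + IZR z) = (Int_part r + z)%Z.
Proof. apply Int_part_unique; rewrite plus_IZR; destruct (Int_part_spec r); lra. Qed.

Lemma Int_part_IZR z : Int_part (IZR z) = z.
Proof. apply Int_part_unique; lra. Qed.

Lemma Rabs_Rmin1_le a b : Rabs (Rmin 1 a - Rmin 1 b) <= Rabs (a - b).
Proof.
  assert (h1 := Rle_abs (a - b)); assert (h2 := Rle_abs (b - a)).
  rewrite (Rabs_minus_sym b a) in h2.
  unfold Rmin; repeat destruct (Rle_dec _ _); apply Rabs_le; lra.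
Qed.

Lemma Rabs_Rmax0_dist_le r c u1 u2 :
  Rabs (Rmax 0 (r - Rabs (u1 - c)) - Rmax 0 (r - Rabs (u2 - c))) <= Rabs (u1 - u2).
Proof.
  assert (h := Rabs_triang_inv2 (u1 - c) (u2 - c)).
  replace (u1 - c - (u2 - c)) with (u1 - u2) in h by ring.
  apply Rabs_le_inv in h.
  unfold Rmax; repeat destruct (Rle_dec _ _); apply Rabs_le; lra.
Qed.

Lemma pow_unbounded c X : 1 < c -> exists N, forall n, (N <= n)%nat -> X < c ^ n.
Proof.
  intros Hc; assert (Hx : 0 < Rabs X + 1) by (assert (h := Rabs_pos X); lra).
  destruct (pow_lt_1_zero (/ c)) with (y := / (Rabs X + 1)) as [N HN].
  { rewrite Rabs_right.
    - apply (Rmult_lt_reg_l c); [lra|]; rewrite Rinv_r by lra; lra.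
    - apply Rle_ge, Rlt_le, Rinv_0_lt_compat; lra. }
  { apply Rinv_0_lt_compat; auto. }
  exists N; intros n Hn; assert (h := HN n Hn); rewrite pow_inv in h.
  assert (hp : 0 < c ^ n) by (apply pow_lt; lra).
  rewrite Rabs_right in h by (apply Rle_ge, Rlt_le, Rinv_0_lt_compat; auto).
  destruct (Rlt_le_dec (Rabs X + 1) (c ^ n)) as [H|H].
  - assert (h2 := Rle_abs X); lra.
  - assert (/ (Rabs X + 1) <= / c ^ n) by (apply Rinv_le_contravar; auto); lra.
Qed.

Lemma Un_cv_const c : Un_cv (fun _ => c) c.
Proof. intros eps He; exists O; intros n _; unfold R_dist; rewrite Rminus_diag, Rabs_R0; lra. Qed.

Lemma Un_cv_dist_le (u v : nat -> R) l1 l2 B : (forall n, Rabs (u n - v n) <= B) ->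
  Un_cv u l1 -> Un_cv v l2 -> Rabs (l1 - l2) <= B.
Proof.
  intros H H1 H2; assert (Hd := CV_minus _ _ _ _ H1 H2).
  apply Rabs_le; split.
  - apply Rle_cv_lim with (Un := fun _ => - B) (Vn := fun i => u i - v i); auto.
    + intros n; destruct (Rabs_le_inv _ _ (H n)); lra.
    + apply Un_cv_const.
  - apply Rle_cv_lim with (Un := fun i => u i - v i) (Vn := fun _ => B); auto.
    + intros n; destruct (Rabs_le_inv _ _ (H n)); lra.
    + apply Un_cv_const.
Qed.

Lemma Un_cv_eventually_ext (u v : nat -> R) l N :
  (forall n, (N <= n)%nat -> u n = v n) -> Un_cv u l -> Un_cv v l.
Proof.
  intros H Hu eps He; destruct (Hu eps He) as [N1 HN1]; exists (Nat.max N N1).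
  intros n Hn; rewrite <- H by lia; apply HN1; lia.
Qed.

Lemma is_lub_ext (E1 E2 : R -> Prop) m1 m2 :
  (forall r, E1 r <-> E2 r) -> is_lub E1 m1 -> is_lub E2 m2 -> m1 = m2.
Proof.
  intros H [U1 L1] [U2 L2]; apply Rle_antisym.
  - apply L1; intros r Hr; apply U2, H, Hr.
  - apply L2; intros r Hr; apply U1, H, Hr.
Qed.

(* [squash] collapses every window [3l, 3l+2] to the point 3l and stretches
   [3l+2, 3l+3] by the factor 3. *)
Definition squash (t : R) : R :=
  3 * IZR (Int_part (t / 3)) + 3 * Rmax 0 (t - 3 * IZR (Int_part (t / 3)) - 2).

Lemma squash_block t : 3 * IZR (Int_part (t / 3)) <= t < 3 * IZR (Int_part (t / 3)) + 3.
Proof. destruct (Int_part_spec (t / 3)); lra. Qed.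

Lemma squash_near t : Rabs (squash t - t) <= 2.
Proof.
  unfold squash; destruct (squash_block t); set (q := IZR (Int_part (t / 3))) in *.
  unfold Rmax; destruct (Rle_dec 0 _); apply Rabs_le; lra.
Qed.

Lemma squash_incr_lip t1 t2 : t1 <= t2 -> 0 <= squash t2 - squash t1 <= 3 * (t2 - t1).
Proof.
  intros H; unfold squash; destruct (squash_block t1), (squash_block t2).
  assert (Hm := Int_part_le_compat (t1 / 3) (t2 / 3) ltac:(lra)).
  set (q1 := Int_part (t1 / 3)) in *; set (q2 := Int_part (t2 / 3)) in *.
  destruct (Z.eq_dec q1 q2) as [E|E].
  - rewrite E in *; unfold Rmax; repeat destruct (Rle_dec _ _); lra.
  - assert (Hq : IZR (q1 + 1) <= IZR q2) by (apply IZR_le; lia); rewrite plus_IZR in Hq.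
    unfold Rmax; repeat destruct (Rle_dec _ _); lra.
Qed.

Lemma squash_lip t1 t2 : Rabs (squash t1 - squash t2) <= 3 * Rabs (t1 - t2).
Proof.
  destruct (Rle_dec t1 t2) as [H|H].
  - destruct (squash_incr_lip t1 t2 H).
    rewrite !Rabs_left1 by lra; lra.
  - destruct (squash_incr_lip t2 t1 ltac:(lra)).
    rewrite !Rabs_right by lra; lra.
Qed.

Lemma squash_window (l : Z) t : 3 * IZR l <= t <= 3 * IZR l + 2 -> squash t = 3 * IZR l.
Proof.
  intros H; unfold squash; rewrite (Int_part_unique l (t / 3)) by lra.
  unfold Rmax; destruct (Rle_dec 0 _); lra.
Qed.

Lemma squash_eq_inv_le t1 t2 : t1 <= t2 -> squash t1 = squash t2 ->
  t1 = t2 \/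
  exists l : Z, 3 * IZR l <= t1 <= 3 * IZR l + 2 /\ 3 * IZR l <= t2 <= 3 * IZR l + 2.
Proof.
  intros Hle E; destruct (Req_dec t1 t2) as [|Hne]; [now left|right].
  unfold squash in E; destruct (squash_block t1), (squash_block t2).
  assert (Hm := Int_part_le_compat (t1 / 3) (t2 / 3) ltac:(lra)).
  set (q1 := Int_part (t1 / 3)) in *; set (q2 := Int_part (t2 / 3)) in *.
  destruct (Z.eq_dec q1 q2) as [Eq|Neq].
  - rewrite Eq in *; exists q2; revert E; unfold Rmax.
    repeat destruct (Rle_dec _ _); intros E; repeat split; lra.
  - exfalso; assert (Hq : IZR (q1 + 1) <= IZR q2) by (apply IZR_le; lia).
    rewrite plus_IZR in Hq; revert E; unfold Rmax.
    repeat destruct (Rle_dec _ _); intros E; lra.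
Qed.

Lemma squash_eq_inv t1 t2 : squash t1 = squash t2 ->
  t1 = t2 \/
  exists l : Z, 3 * IZR l <= t1 <= 3 * IZR l + 2 /\ 3 * IZR l <= t2 <= 3 * IZR l + 2.
Proof.
  intros E; destruct (Rle_dec t1 t2) as [H|H]; [now apply squash_eq_inv_le|].
  destruct (squash_eq_inv_le t2 t1 ltac:(lra) (eq_sym E)) as [->|[l Hl]]; [now left|].
  right; exists l; tauto.
Qed.

Definition distZ (t : R) : R := Rmin (t - IZR (Int_part t)) (IZR (Int_part t) + 1 - t).

Lemma distZ_le t (n : Z) : distZ t <= Rabs (t - IZR n).
Proof.
  unfold distZ; destruct (Int_part_spec t).
  destruct (Z_le_gt_dec n (Int_part t)) as [Hn|Hn].
  - apply IZR_le in Hn; rewrite Rabs_right by lra; unfold Rmin; destruct (Rle_dec _ _); lra.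
  - assert (Hn' : IZR (Int_part t + 1) <= IZR n) by (apply IZR_le; lia).
    rewrite plus_IZR in Hn'; rewrite Rabs_left1 by lra.
    unfold Rmin; destruct (Rle_dec _ _); lra.
Qed.

Lemma distZ_attained t : exists n : Z, distZ t = Rabs (t - IZR n).
Proof.
  unfold distZ; destruct (Int_part_spec t); unfold Rmin; destruct (Rle_dec _ _).
  - exists (Int_part t); rewrite Rabs_right; lra.
  - exists (Int_part t + 1)%Z; rewrite plus_IZR, Rabs_left1; lra.
Qed.

Lemma distZ_lip a b : Rabs (distZ a - distZ b) <= Rabs (a - b).
Proof.
  destruct (distZ_attained a) as [na Ha], (distZ_attained b) as [nb Hb].
  assert (h1 := distZ_le a nb); assert (h2 := distZ_le b na).
  assert (h3 := Rabs_triang (a - b) (b - IZR nb)).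
  assert (h4 := Rabs_triang (b - a) (a - IZR na)).
  replace (a - b + (b - IZR nb)) with (a - IZR nb) in h3 by ring.
  replace (b - a + (a - IZR na)) with (b - IZR na) in h4 by ring.
  rewrite (Rabs_minus_sym b a) in h4; apply Rabs_le; lra.
Qed.

Lemma distZ_ge0 t : 0 <= distZ t.
Proof. destruct (distZ_attained t) as [n ->]; apply Rabs_pos. Qed.

Lemma distZ_add1 t : distZ (t + 1) = distZ t.
Proof.
  unfold distZ; change 1 with (IZR 1) at 1 3.
  rewrite Int_part_add_IZR, plus_IZR; f_equal; ring.
Qed.

Lemma distZ_eq0 t : distZ t = 0 -> t = IZR (Int_part t).
Proof. unfold distZ; destruct (Int_part_spec t); unfold Rmin; destruct (Rle_dec _ _); lra. Qed.

Lemma distZ_IZR z : distZ (IZR z) = 0.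
Proof. unfold distZ; rewrite Int_part_IZR; unfold Rmin; destruct (Rle_dec _ _); lra. Qed.

(** * The vertical lines carrying the gluings *)

Definition glue_line (k kk i : Z) : R := powerRZ 4 (- k) * (IZR kk + IZR i / 4).

Lemma powerRZ4_IZR (e : Z) : (0 <= e)%Z -> powerRZ 4 e = IZR (4 ^ e).
Proof.
  intros H; rewrite <- (Z2Nat.id e H), <- pow_powerRZ.
  change 4 with (IZR 4); rewrite pow_IZR; reflexivity.
Qed.

Lemma glue_line_scaled e k kk i : (k + 1 <= e)%Z ->
  powerRZ 4 e * glue_line k kk i = IZR (4 ^ (e - k - 1) * (4 * kk + i)).
Proof.
  intros H; unfold glue_line.
  rewrite <- Rmult_assoc, <- powerRZ_add by lra.
  replace (e + - k)%Z with ((e - k - 1) + 1)%Z by ring.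
  rewrite powerRZ_add, powerRZ4_IZR by (lra || lia).
  rewrite mult_IZR, plus_IZR, mult_IZR; simpl; field.
Qed.

Lemma glue_line_inj_le k kk i k' kk' i' : (1 <= i <= 3)%Z -> (1 <= i' <= 3)%Z ->
  (k <= k')%Z -> glue_line k kk i = glue_line k' kk' i' -> k = k' /\ i = i'.
Proof.
  intros Hi Hi' Hk E.
  assert (E2 : powerRZ 4 (k' + 1) * glue_line k kk i = powerRZ 4 (k' + 1) * glue_line k' kk' i')
    by (rewrite E; reflexivity).
  rewrite !glue_line_scaled in E2 by lia; apply eq_IZR in E2.
  replace (k' + 1 - k' - 1)%Z with 0%Z in E2 by ring; rewrite Z.pow_0_r in E2.
  destruct (Z.eq_dec k k') as [e|e].
  - subst; replace (k' + 1 - k' - 1)%Z with 0%Z in E2 by ring; rewrite Z.pow_0_r in E2; lia.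
  - exfalso; replace (k' + 1 - k - 1)%Z with (Z.succ (k' - k - 1)) in E2 by ring.
    rewrite Z.pow_succ_r in E2 by lia; lia.
Qed.

Lemma glue_line_inj k kk i k' kk' i' : (1 <= i <= 3)%Z -> (1 <= i' <= 3)%Z ->
  glue_line k kk i = glue_line k' kk' i' -> k = k' /\ i = i'.
Proof.
  intros Hi Hi' E; destruct (Z_le_gt_dec k k').
  - now apply (glue_line_inj_le k kk i k' kk' i').
  - destruct (glue_line_inj_le k' kk' i' k kk i); auto; lia.
Qed.

Lemma grid_gap (x0 : R) (K : Z) : exists r, 0 < r /\
  forall z : Z, IZR z * powerRZ 4 (- K) <> x0 -> r <= Rabs (IZR z * powerRZ 4 (- K) - x0).
Proof.
  set (c := powerRZ 4 (- K)); assert (Hc : 0 < c) by (apply powerRZ_lt; lra).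
  set (u0 := x0 / c).
  assert (Hx : forall z : Z, Rabs (IZR z * c - x0) = c * Rabs (IZR z - u0)).
  { intros z; unfold u0; replace (IZR z * c - x0) with (c * (IZR z - x0 / c)) by (field; lra).
    rewrite Rabs_mult, (Rabs_right c) by lra; reflexivity. }
  destruct (Req_dec (distZ u0) 0) as [D|D].
  - exists c; split; auto; intros z Hz; rewrite Hx.
    assert (Hu := distZ_eq0 _ D); set (n := Int_part u0) in *.
    assert (z <> n) by (intros ->; apply Hz; unfold u0 in Hu; rewrite <- Hu; field; lra).
    rewrite Hu; destruct (Z_lt_le_dec z n).
    + assert (Hzn : IZR (z + 1) <= IZR n) by (apply IZR_le; lia); rewrite plus_IZR in Hzn.
      rewrite Rabs_left1 by lra; nra.
    + assert (Hzn : IZR (n + 1) <= IZR z) by (apply IZR_le; lia); rewrite plus_IZR in Hzn.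
      rewrite Rabs_right by lra; nra.
  - exists (c * distZ u0); split.
    + apply Rmult_lt_0_compat; auto; destruct (distZ_ge0 u0); lra.
    + intros z _; rewrite Hx; apply Rmult_le_compat_l; [lra|].
      rewrite Rabs_minus_sym; apply distZ_le.
Qed.

Lemma glue_line_gap (K : nat) x0 : exists r, 0 < r /\
  forall k kk i, (k < Z.of_nat K)%Z -> glue_line k kk i <> x0 ->
    r <= Rabs (glue_line k kk i - x0).
Proof.
  destruct (grid_gap x0 (Z.of_nat K)) as [r [Hr Hg]]; exists r; split; auto.
  intros k kk i Hk.
  replace (glue_line k kk i) with
    (IZR (4 ^ (Z.of_nat K - k - 1) * (4 * kk + i)) * powerRZ 4 (- Z.of_nat K)); [apply Hg|].
  rewrite <- (glue_line_scaled (Z.of_nat K)) by lia.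
  rewrite Rmult_comm, <- Rmult_assoc, <- powerRZ_add by lra.
  replace (- Z.of_nat K + Z.of_nat K)%Z with 0%Z by ring; simpl; ring.
Qed.

(** * One level of correction *)

Definition lip_y (g : R2 -> R) (c : R) : Prop :=
  forall x y1 y2, Rabs (g (x, y1) - g (x, y2)) <= c * Rabs (y1 - y2).

Definition lip_x (g : R2 -> R) (c : R) : Prop :=
  forall x1 x2 y, Rabs (g (x1, y) - g (x2, y)) <= c * Rabs (x1 - x2).

Definition roundZ (u : R) : Z := Int_part (u + / 2).

Lemma roundZ_spec u : IZR (roundZ u) - / 2 <= u < IZR (roundZ u) + / 2.
Proof. unfold roundZ; destruct (Int_part_spec (u + / 2)); lra. Qed.

Lemma roundZ_IZR z : roundZ (IZR z) = z.
Proof. apply Int_part_unique; lra. Qed.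

Definition tent (e : R) : R := Rmax 0 (1 - 4 * Rabs e).

Lemma tent_range e : 0 <= tent e <= 1.
Proof. unfold tent, Rmax; assert (h := Rabs_pos e); destruct (Rle_dec _ _); lra. Qed.

Lemma tent_lip e1 e2 : Rabs (tent e1 - tent e2) <= 4 * Rabs (e1 - e2).
Proof.
  assert (h := Rabs_triang_inv2 e1 e2); apply Rabs_le_inv in h.
  unfold tent, Rmax; repeat destruct (Rle_dec _ _); apply Rabs_le; lra.
Qed.

Lemma tent_roundZ_switch u1 u2 : roundZ u1 <> roundZ u2 ->
  tent (u1 - IZR (roundZ u1)) <= 4 * Rabs (u1 - u2).
Proof.
  intros H; destruct (roundZ_spec u1), (roundZ_spec u2).
  assert (Hd : / 2 - Rabs (u1 - IZR (roundZ u1)) <= Rabs (u1 - u2)).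
  { destruct (Z_lt_le_dec (roundZ u1) (roundZ u2)).
    - assert (Hr : IZR (roundZ u1 + 1) <= IZR (roundZ u2)) by (apply IZR_le; lia).
      rewrite plus_IZR in Hr; assert (h := Rle_abs (u1 - IZR (roundZ u1))).
      rewrite (Rabs_left1 (u1 - u2)) by lra; lra.
    - assert (Hr : IZR (roundZ u2 + 1) <= IZR (roundZ u1)) by (apply IZR_le; lia).
      rewrite plus_IZR in Hr; assert (h := Rle_abs (IZR (roundZ u1) - u1)).
      rewrite Rabs_minus_sym in h; rewrite (Rabs_right (u1 - u2)) by lra; lra. }
  unfold tent, Rmax; destruct (Rle_dec _ _); assert (h := Rabs_pos (u1 - u2)); lra.
Qed.

Section OneLevel.

Variable L : nat.
Hypothesis mv_pos : 0 < mv L.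

(* The image under Phi^k of a segment a_{kk,l,i} has length [seg_height k]. *)
Definition seg_height (k : Z) : R := powerRZ (mv L) (- k) / mv L.

Lemma seg_height_pos k : 0 < seg_height k.
Proof. unfold seg_height; apply Rdiv_lt_0_compat; auto; apply powerRZ_lt; auto. Qed.

Lemma seg_height_nat N : seg_height (Z.of_nat N) = / mv L ^ S N.
Proof.
  unfold seg_height; rewrite powerRZ_neg', <- pow_powerRZ; simpl.
  assert (mv L ^ N <> 0) by (apply pow_nonzero; lra).
  field; split; lra || auto.
Qed.

(* On a gluing line of level k and index s, [level_proj k s] identifies each
   segment with the segment it is glued to. *)
Definition level_proj (k s : Z) (y : R) : R :=
  seg_height k * (squash (y / seg_height k - (IZR s - 1)) + (IZR s - 1)).

Lemma level_proj_near k s y : Rabs (level_proj k s y - y) <= 2 * seg_height k.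
Proof.
  assert (Hd := seg_height_pos k); unfold level_proj.
  set (d := seg_height k) in *; set (t := y / d - (IZR s - 1)).
  replace (d * (squash t + (IZR s - 1)) - y) with (d * (squash t - t)) by (unfold t; field; lra).
  rewrite Rabs_mult, Rabs_right by lra; assert (h := squash_near t); nra.
Qed.

Lemma level_proj_lip k s y1 y2 :
  Rabs (level_proj k s y1 - level_proj k s y2) <= 3 * Rabs (y1 - y2).
Proof.
  assert (Hd := seg_height_pos k); unfold level_proj; set (d := seg_height k) in *.
  set (t1 := y1 / d - (IZR s - 1)); set (t2 := y2 / d - (IZR s - 1)).
  replace (d * (squash t1 + (IZR s - 1)) - d * (squash t2 + (IZR s - 1)))
    with (d * (squash t1 - squash t2)) by ring.
  assert (E : y1 - y2 = d * (t1 - t2)) by (unfold t1, t2; field; lra).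
  rewrite E, !Rabs_mult, Rabs_right by lra; assert (h := squash_lip t1 t2); nra.
Qed.

Lemma in_segment_scaled (l i : Z) y :
  (3 * IZR l + IZR i - 1) / mv L <= y <= (3 * IZR l + IZR i) / mv L ->
  3 * IZR l + IZR i - 1 <= y * mv L <= 3 * IZR l + IZR i.
Proof.
  intros [a b]; split.
  - apply (Rmult_le_compat_r (mv L)) in a; [|lra].
    replace ((3 * IZR l + IZR i - 1) / mv L * mv L) with (3 * IZR l + IZR i - 1) in a
      by (field; lra); lra.
  - apply (Rmult_le_compat_r (mv L)) in b; [|lra].
    replace ((3 * IZR l + IZR i) / mv L * mv L) with (3 * IZR l + IZR i) in b
      by (field; lra); lra.
Qed.

Lemma level_proj_glued k (l i : Z) y :
  (3 * IZR l + IZR i - 1) / mv L <= y <= (3 * IZR l + IZR i) / mv L ->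
  level_proj k i (powerRZ (mv L) (- k) * y) =
  level_proj k i (powerRZ (mv L) (- k) * (y + / mv L)).
Proof.
  intros Hy; unfold level_proj, seg_height.
  assert (Hp : 0 < powerRZ (mv L) (- k)) by (apply powerRZ_lt; auto).
  replace (powerRZ (mv L) (- k) * y / (powerRZ (mv L) (- k) / mv L) - (IZR i - 1))
    with (y * mv L - (IZR i - 1)) by (field; lra).
  replace (powerRZ (mv L) (- k) * (y + / mv L) / (powerRZ (mv L) (- k) / mv L) - (IZR i - 1))
    with ((y * mv L - (IZR i - 1)) + 1) by (field; lra).
  apply in_segment_scaled in Hy.
  rewrite !(squash_window l) by lra; reflexivity.
Qed.

(* Near the gluing line x = n / 4^(k+1) of level k (n not divisible by 4), [g] is
   replaced by [g] precomposed with the projection along that line, damped by a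
   tent of half-width 4^-(k+2) in x. *)
Definition correction (k : Z) (g : R2 -> R) (z : R2) : R :=
  let u := powerRZ 4 (k + 1) * fst z in
  let n := roundZ u in
  if Z.eq_dec (n mod 4) 0 then 0 else
  tent (u - IZR n) *
    (g (IZR n / powerRZ 4 (k + 1), level_proj k (n mod 4) (snd z))
     - g (IZR n / powerRZ 4 (k + 1), snd z)).

Section Lipschitz.

Variables (k : Z) (g : R2 -> R) (c : R).
Hypotheses (c_ge0 : 0 <= c) (g_lip : lip_y g c).

Lemma level_proj_jump x s y :
  Rabs (g (x, level_proj k s y) - g (x, y)) <= 2 * c * seg_height k.
Proof.
  assert (h1 := g_lip x (level_proj k s y) y); assert (h2 := level_proj_near k s y).
  assert (h3 := Rabs_pos (level_proj k s y - y)); nra.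
Qed.

Lemma correction_bound_tent x y :
  Rabs (correction k g (x, y)) <=
  tent (powerRZ 4 (k + 1) * x - IZR (roundZ (powerRZ 4 (k + 1) * x))) * (2 * c * seg_height k).
Proof.
  assert (Hd := seg_height_pos k).
  assert (Hb := tent_range (powerRZ 4 (k + 1) * x - IZR (roundZ (powerRZ 4 (k + 1) * x)))).
  unfold correction; simpl; destruct (Z.eq_dec _ 0).
  - rewrite Rabs_R0; apply Rmult_le_pos; [lra|nra].
  - rewrite Rabs_mult, (Rabs_right (tent _)) by lra.
    apply Rmult_le_compat_l; [lra|apply level_proj_jump].
Qed.

Lemma correction_bound z : Rabs (correction k g z) <= 2 * c * seg_height k.
Proof.
  destruct z as [x y]; assert (Hd := seg_height_pos k).
  eapply Rle_trans; [apply correction_bound_tent|].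
  destruct (tent_range (powerRZ 4 (k + 1) * x - IZR (roundZ (powerRZ 4 (k + 1) * x)))).
  assert (0 <= 2 * c * seg_height k) by nra; nra.
Qed.

Lemma correction_lip_y : lip_y (correction k g) (4 * c).
Proof.
  intros x y1 y2; unfold correction; simpl.
  destruct (Z.eq_dec _ 0).
  { rewrite Rminus_0_r, Rabs_R0; assert (h := Rabs_pos (y1 - y2)); nra. }
  set (b := tent _); assert (Hb : 0 <= b <= 1) by apply tent_range.
  set (X := IZR _ / _); set (s := (_ mod 4)%Z).
  rewrite <- Rmult_minus_distr_l, Rabs_mult, (Rabs_right b) by lra.
  assert (h1 := g_lip X (level_proj k s y1) (level_proj k s y2)).
  assert (h2 := g_lip X y1 y2); assert (h3 := level_proj_lip k s y1 y2).
  set (e := g (X, level_proj k s y1) - g (X, y1) - (g (X, level_proj k s y2) - g (X, y2))).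
  assert (h4 : Rabs e <= 4 * c * Rabs (y1 - y2)).
  { unfold e; replace (g (X, level_proj k s y1) - g (X, y1) - (g (X, level_proj k s y2) - g (X, y2)))
      with (g (X, level_proj k s y1) - g (X, level_proj k s y2) + - (g (X, y1) - g (X, y2))) by ring.
    eapply Rle_trans; [apply Rabs_triang|]; rewrite Rabs_Ropp; nra. }
  assert (h5 := Rabs_pos e); nra.
Qed.

Lemma correction_lip_x x1 x2 y :
  Rabs (correction k g (x1, y) - correction k g (x2, y)) <=
  8 * (2 * c * seg_height k) * powerRZ 4 (k + 1) * Rabs (x1 - x2).
Proof.
  assert (Hd := seg_height_pos k); assert (Hp : 0 < powerRZ 4 (k + 1)) by (apply powerRZ_lt; lra).
  set (A := 2 * c * seg_height k); assert (HA : 0 <= A) by (unfold A; nra).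
  set (u1 := powerRZ 4 (k + 1) * x1); set (u2 := powerRZ 4 (k + 1) * x2).
  replace (8 * A * powerRZ 4 (k + 1) * Rabs (x1 - x2)) with (8 * A * Rabs (u1 - u2))
    by (unfold u1, u2; rewrite <- Rmult_minus_distr_l, Rabs_mult, (Rabs_right (powerRZ _ _)); lra).
  assert (Hu := Rabs_pos (u1 - u2)).
  destruct (Z.eq_dec (roundZ u1) (roundZ u2)) as [E|E].
  - unfold correction; simpl; fold u1 u2; rewrite E; set (n := roundZ u2).
    destruct (Z.eq_dec _ 0); [rewrite Rminus_0_r, Rabs_R0; nra|].
    rewrite <- Rmult_minus_distr_r, Rabs_mult.
    assert (h1 := tent_lip (u1 - IZR n) (u2 - IZR n)).
    replace (u1 - IZR n - (u2 - IZR n)) with (u1 - u2) in h1 by ring.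
    assert (h2 := level_proj_jump (IZR n / powerRZ 4 (k + 1)) (n mod 4)%Z y).
    fold A in h2; apply Rle_trans with (4 * Rabs (u1 - u2) * A); [|nra].
    apply Rmult_le_compat; try apply Rabs_pos; lra.
  - assert (h1 := correction_bound_tent x1 y); assert (h2 := correction_bound_tent x2 y).
    fold u1 u2 A in h1, h2.
    assert (b1 := tent_roundZ_switch u1 u2 E).
    assert (b2 := tent_roundZ_switch u2 u1 (not_eq_sym E)).
    rewrite (Rabs_minus_sym u2 u1) in b2.
    assert (h := Rabs_triang (correction k g (x1, y)) (- correction k g (x2, y))).
    rewrite Rabs_Ropp in h.
    assert (tent (u1 - IZR (roundZ u1)) * A <= 4 * Rabs (u1 - u2) * A)
      by (apply Rmult_le_compat_r; auto).
    assert (tent (u2 - IZR (roundZ u2)) * A <= 4 * Rabs (u1 - u2) * A)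
      by (apply Rmult_le_compat_r; auto).
    unfold Rminus at 1; lra.
Qed.

End Lipschitz.

Lemma correction_coarser_line k k' kk i g y : (1 <= i <= 3)%Z -> (k < k')%Z ->
  correction k' g (glue_line k kk i, y) = 0.
Proof.
  intros Hi Hk; unfold correction; simpl.
  rewrite glue_line_scaled, roundZ_IZR by lia.
  destruct (Z.eq_dec _ 0) as [|n]; auto; exfalso; apply n.
  replace (k' + 1 - k - 1)%Z with (Z.succ (k' - k - 1)) by ring.
  rewrite Z.pow_succ_r by lia; rewrite <- Z.mul_assoc, Z.mul_comm; apply Z_mod_mult.
Qed.

Lemma correction_same_line k kk i g y : (1 <= i <= 3)%Z ->
  correction k g (glue_line k kk i, y) =
  g (glue_line k kk i, level_proj k i y) - g (glue_line k kk i, y).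
Proof.
  intros Hi; unfold correction; simpl.
  rewrite glue_line_scaled, roundZ_IZR by lia.
  replace (k + 1 - k - 1)%Z with 0%Z by ring; rewrite Z.pow_0_r, Z.mul_1_l.
  assert (Hmod : ((4 * kk + i) mod 4 = i)%Z).
  { rewrite Z.add_comm, Z.mul_comm, Z_mod_plus_full; apply Z.mod_small; lia. }
  rewrite Hmod; destruct (Z.eq_dec i 0); [lia|].
  rewrite Rminus_diag; unfold tent; rewrite Rabs_R0, Rmult_0_r, Rminus_0_r.
  replace (Rmax 0 1) with 1 by (unfold Rmax; destruct (Rle_dec 0 1); lra).
  replace (IZR (4 * kk + i) / powerRZ 4 (k + 1)) with (glue_line k kk i); [ring|].
  assert (E0 := glue_line_scaled (k + 1) k kk i ltac:(lia)).
  replace (k + 1 - k - 1)%Z with 0%Z in E0 by ring; rewrite Z.pow_0_r, Z.mul_1_l in E0.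
  rewrite <- E0; field; apply powerRZ_NOR; lra.
Qed.

End OneLevel.

Lemma Phi_pow_gen0 L k p q : gen0 L p q -> exists kk l i, (1 <= i <= 3)%Z /\
  (3 * IZR l + IZR i - 1) / mv L <= snd p <= (3 * IZR l + IZR i) / mv L /\
  Phi_pow L k p = (glue_line k kk i, powerRZ (mv L) (- k) * snd p) /\
  Phi_pow L k q = (glue_line k kk i, powerRZ (mv L) (- k) * (snd p + / mv L)).
Proof.
  intros [kk [l [i [Hi [[Hx Hy] Hq]]]]]; exists kk, l, i.
  unfold Phi_pow, glue_line, m; rewrite Hq; simpl; rewrite Hx; auto.
Qed.

Lemma Rinf_invariant L (f : R2 -> R) :
  (forall k p q, gen0 L p q -> f (Phi_pow L k p) = f (Phi_pow L k q)) ->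
  forall u v, Rinf L u v -> f u = f v.
Proof.
  intros H u v Huv; induction Huv as [u v [i [p [q [Hr [-> ->]]]]]| | |]; try congruence.
  induction Hr; auto; congruence.
Qed.

Lemma Rinf_fst L u v : Rinf L u v -> fst u = fst v.
Proof.
  apply (Rinf_invariant L fst).
  intros k p q [kk [l [i [Hi [Ha Hq]]]]]; unfold Phi_pow; rewrite Hq; reflexivity.
Qed.

Lemma Rj_Rinf L j u v : Rj L j u v -> Rinf L u v.
Proof.
  intros H; induction H as [u v [i [_ Hp]]| | |].
  - apply rst_step; exists i; auto.
  - apply rst_refl.
  - apply rst_sym; auto.
  - eapply rst_trans; eauto.
Qed.

Lemma mv_ge_300 L : (100 <= L)%nat -> 300 <= mv L.
Proof.
  intros H; unfold mv; apply le_INR in H.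
  replace (INR 100) with 100 in H by (simpl; lra); lra.
Qed.

Lemma in_cell_dist L i a b x y : in_cell L i a b x -> in_cell L i a b y ->
  Rabs (fst x - fst y) <= powerRZ 4 (- i) /\ Rabs (snd x - snd y) <= powerRZ (mv L) (- i).
Proof. unfold in_cell, m; intros [[] []] [[] []]; split; apply Rabs_le; lra. Qed.

(** * Iterating the corrections *)

Section Iteration.

Variables (L K : nat) (b : R2 -> R) (L0 : R).
Hypotheses (mv_ge : 300 <= mv L) (L0_ge0 : 0 <= L0) (b_lip : lip_y b L0).

Let mv_pos : 0 < mv L.
Proof. lra. Qed.

Fixpoint corrected (n : nat) : R2 -> R :=
  match n with
  | O => b
  | S n' => fun z => corrected n' z + correction L (Z.of_nat (K + n')) (corrected n') z
  end.

Definition decay : R := 5 / mv L.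
Definition amp0 : R := 2 * L0 / mv L ^ (K + 1).

Lemma decay_bounds : 0 < decay <= / 60.
Proof.
  unfold decay; split; [apply Rdiv_lt_0_compat; lra|].
  apply (Rmult_le_reg_r (mv L)); [lra|].
  unfold Rdiv; rewrite Rmult_assoc, Rinv_l by lra; lra.
Qed.

Lemma amp0_ge0 : 0 <= amp0.
Proof. unfold amp0; apply Rmult_le_pos; [lra|]; apply Rlt_le, Rinv_0_lt_compat, pow_lt; lra. Qed.

Lemma corrected_lip_y n : lip_y (corrected n) (L0 * 5 ^ n).
Proof.
  induction n as [|n IH]; simpl; [now rewrite Rmult_1_r|].
  assert (Hp : 0 <= L0 * 5 ^ n) by (apply Rmult_le_pos; auto; apply pow_le; lra).
  intros x y1 y2; assert (h1 := IH x y1 y2).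
  assert (h2 := correction_lip_y L mv_pos (Z.of_nat (K + n)) _ _ Hp IH x y1 y2).
  set (c1 := correction _ _ _ (x, y1)) in *; set (c2 := correction _ _ _ (x, y2)) in *.
  assert (h3 := Rabs_triang (corrected n (x, y1) - corrected n (x, y2)) (c1 - c2)).
  replace (corrected n (x, y1) - corrected n (x, y2) + (c1 - c2))
    with (corrected n (x, y1) + c1 - (corrected n (x, y2) + c2)) in h3 by ring.
  lra.
Qed.

Lemma correction_corrected_bound n z :
  Rabs (correction L (Z.of_nat (K + n)) (corrected n) z) <= amp0 * decay ^ n.
Proof.
  assert (Hp : 0 <= L0 * 5 ^ n) by (apply Rmult_le_pos; auto; apply pow_le; lra).
  eapply Rle_trans; [apply (correction_bound L mv_pos _ _ _ Hp (corrected_lip_y n))|].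
  rewrite (seg_height_nat L mv_pos); unfold amp0, decay, Rdiv.
  rewrite Rpow_mult_distr, pow_inv; replace (S (K + n)) with ((K + 1) + n)%nat by lia.
  rewrite pow_add, Rinv_mult; right; ring.
Qed.

Lemma corrected_shift_diff k d z :
  Rabs (corrected (k + d) z - corrected k z) <= 2 * amp0 * decay ^ k - 2 * amp0 * decay ^ (k + d).
Proof.
  assert (Hr := decay_bounds); assert (Ha := amp0_ge0).
  induction d as [|d IH].
  - rewrite Nat.add_0_r, Rminus_diag, Rabs_R0; lra.
  - replace (k + S d)%nat with (S (k + d)) by lia; simpl corrected.
    assert (h := correction_corrected_bound (k + d) z); set (c := correction _ _ _ z) in *.
    assert (h3 := Rabs_triang (corrected (k + d) z - corrected k z) c).
    replace (corrected (k + d) z - corrected k z + c) with (corrected (k + d) z + c - corrected k z)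
      in h3 by ring.
    simpl pow; assert (0 <= decay ^ (k + d)) by (apply pow_le; lra).
    assert (0 <= amp0 * decay ^ (k + d)) by (apply Rmult_le_pos; lra); nra.
Qed.

Lemma corrected_diff_le k n z : (k <= n)%nat ->
  Rabs (corrected n z - corrected k z) <= 2 * amp0 * decay ^ k.
Proof.
  intros Hkn; replace n with (k + (n - k))%nat by lia.
  assert (h := corrected_shift_diff k (n - k) z).
  assert (0 <= decay ^ (k + (n - k))) by (apply pow_le; destruct decay_bounds; lra).
  assert (Ha := amp0_ge0); nra.
Qed.

Definition corrected_lim (z : R2) : R :=
  epsilon (inhabits 0) (fun l => Un_cv (fun n => corrected n z) l).

Lemma corrected_cauchy z : Cauchy_crit (fun n => corrected n z).
Proof.
  intros eps He; destruct decay_bounds as [r1 r2]; assert (Ha := amp0_ge0).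
  destruct (pow_lt_1_zero decay ltac:(rewrite Rabs_right; lra) (eps / (4 * amp0 + 1)))
    as [N HN]; [apply Rdiv_lt_0_compat; lra|].
  exists N; intros n1 n2 h1 h2; unfold R_dist.
  assert (e1 := corrected_diff_le N n1 z h1); assert (e2 := corrected_diff_le N n2 z h2).
  assert (hN := HN N (le_n N)); rewrite Rabs_right in hN by (apply Rle_ge, pow_le; lra).
  assert (h3 := Rabs_triang (corrected n1 z - corrected N z) (corrected N z - corrected n2 z)).
  replace (corrected n1 z - corrected N z + (corrected N z - corrected n2 z))
    with (corrected n1 z - corrected n2 z) in h3 by ring.
  rewrite (Rabs_minus_sym (corrected N z)) in h3.
  assert (hh : (4 * amp0 + 1) * decay ^ N < eps).
  { apply (Rmult_lt_compat_l (4 * amp0 + 1)) in hN; [|lra].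
    replace ((4 * amp0 + 1) * (eps / (4 * amp0 + 1))) with eps in hN by (field; lra); exact hN. }
  assert (0 <= decay ^ N) by (apply pow_le; lra).
  assert (0 <= amp0 * decay ^ N) by (apply Rmult_le_pos; lra); nra.
Qed.

Lemma corrected_cv z : Un_cv (fun n => corrected n z) (corrected_lim z).
Proof.
  unfold corrected_lim; apply epsilon_spec.
  destruct (R_complete _ (corrected_cauchy z)) as [l Hl]; exists l; exact Hl.
Qed.

Lemma corrected_lim_dist_le z1 z2 B :
  (forall n, Rabs (corrected n z1 - corrected n z2) <= B) ->
  Rabs (corrected_lim z1 - corrected_lim z2) <= B.
Proof. intros H; exact (Un_cv_dist_le _ _ _ _ B H (corrected_cv z1) (corrected_cv z2)). Qed.

Lemma corrected_lim_near z : Rabs (corrected_lim z - b z) <= 2 * amp0.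
Proof.
  apply (Un_cv_dist_le (fun n => corrected n z) (fun _ => b z)).
  - intros n; assert (h := corrected_diff_le 0 n z ltac:(lia)).
    simpl in h; rewrite Rmult_1_r in h; exact h.
  - apply corrected_cv.
  - apply Un_cv_const.
Qed.

Lemma corrected_lim_eventually z1 z2 N :
  (forall n, (N <= n)%nat -> corrected n z1 = corrected n z2) ->
  corrected_lim z1 = corrected_lim z2.
Proof.
  intros H; apply (UL_sequence (fun n => corrected n z2)); [|apply corrected_cv].
  apply (Un_cv_eventually_ext (fun n => corrected n z1) _ _ N H), corrected_cv.
Qed.

Lemma corrected_coarse_line k kk i y n : (1 <= i <= 3)%Z -> (k < Z.of_nat K)%Z ->
  corrected n (glue_line k kk i, y) = b (glue_line k kk i, y).
Proof.
  intros Hi Hk; induction n as [|n IH]; simpl; auto.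
  rewrite correction_coarser_line by lia; rewrite IH; ring.
Qed.

Lemma corrected_glue_line k kk i y n0 d : (1 <= i <= 3)%Z -> Z.of_nat (K + n0) = k ->
  corrected (S n0 + d) (glue_line k kk i, y) =
  corrected n0 (glue_line k kk i, level_proj L k i y).
Proof.
  intros Hi Hk; induction d as [|d IH].
  - rewrite Nat.add_0_r; simpl corrected; rewrite Hk, correction_same_line by auto; ring.
  - replace (S n0 + S d)%nat with (S (S n0 + d)) by lia; simpl corrected.
    rewrite (correction_coarser_line L k (Z.of_nat (K + (S n0 + d)))) by lia.
    simpl corrected in IH; rewrite IH; ring.
Qed.

Lemma corrected_lim_gen0_invariant :
  (forall k p q, (k < Z.of_nat K)%Z -> gen0 L p q -> b (Phi_pow L k p) = b (Phi_pow L k q)) ->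
  forall k p q, gen0 L p q -> corrected_lim (Phi_pow L k p) = corrected_lim (Phi_pow L k q).
Proof.
  intros Hbc k p q Hg.
  destruct (Phi_pow_gen0 L k p q Hg) as [kk [l [i [Hi [Hy [Ep Eq]]]]]].
  destruct (Z_lt_le_dec k (Z.of_nat K)) as [Hk|Hk].
  - apply (corrected_lim_eventually _ _ O); intros n _.
    rewrite Ep, Eq, !corrected_coarse_line by auto; rewrite <- Ep, <- Eq; apply Hbc; auto.
  - set (n0 := (Z.to_nat k - K)%nat); assert (Hn0 : Z.of_nat (K + n0) = k) by (unfold n0; lia).
    apply (corrected_lim_eventually _ _ (S n0)); intros n Hn.
    replace n with (S n0 + (n - S n0))%nat by lia.
    rewrite Ep, Eq, !(corrected_glue_line k kk i _ n0) by auto.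
    rewrite (level_proj_glued L mv_pos k l i) by auto; reflexivity.
Qed.

Definition xdecay : R := 20 / mv L.

Variable M0 : R.
Hypotheses (M0_ge0 : 0 <= M0) (b_lip_x : lip_x b M0).

Lemma xdecay_bounds : 0 < xdecay <= / 2.
Proof.
  unfold xdecay; split; [apply Rdiv_lt_0_compat; lra|].
  apply (Rmult_le_reg_r (mv L)); [lra|].
  unfold Rdiv; rewrite Rmult_assoc, Rinv_l by lra; lra.
Qed.

Lemma correction_corrected_lip_x n x1 x2 y :
  Rabs (correction L (Z.of_nat (K + n)) (corrected n) (x1, y) -
        correction L (Z.of_nat (K + n)) (corrected n) (x2, y)) <=
  16 * L0 * xdecay ^ n * Rabs (x1 - x2).
Proof.
  assert (Hp : 0 <= L0 * 5 ^ n) by (apply Rmult_le_pos; auto; apply pow_le; lra).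
  eapply Rle_trans; [apply (correction_lip_x L mv_pos _ _ _ Hp (corrected_lip_y n))|].
  apply Rmult_le_compat_r; [apply Rabs_pos|].
  rewrite (seg_height_nat L mv_pos).
  replace (Z.of_nat (K + n) + 1)%Z with (Z.of_nat (S (K + n))) by lia; rewrite <- pow_powerRZ.
  replace (8 * (2 * (L0 * 5 ^ n) * / mv L ^ S (K + n)) * 4 ^ S (K + n))
    with (16 * L0 * ((4 / mv L) ^ (K + 1) * xdecay ^ n)).
  2:{ unfold xdecay, Rdiv; rewrite !Rpow_mult_distr, !pow_inv.
      replace (S (K + n)) with ((K + 1) + n)%nat by lia; rewrite !pow_add.
      replace 20 with (5 * 4) by ring; rewrite Rpow_mult_distr, !Rinv_mult; ring. }
  assert (h4 : (4 / mv L) ^ (K + 1) <= 1).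
  { rewrite <- (pow1 (K + 1)); apply pow_incr; split.
    - apply Rlt_le, Rdiv_lt_0_compat; lra.
    - apply (Rmult_le_reg_r (mv L)); [lra|].
      unfold Rdiv; rewrite Rmult_assoc, Rinv_l by lra; lra. }
  assert (0 <= xdecay ^ n) by (apply pow_le; destruct xdecay_bounds; lra).
  assert (0 <= (4 / mv L) ^ (K + 1)) by (apply pow_le, Rlt_le, Rdiv_lt_0_compat; lra).
  assert (0 <= L0 * xdecay ^ n) by (apply Rmult_le_pos; lra); nra.
Qed.

Lemma corrected_lip_x n : lip_x (corrected n) (M0 + 32 * L0 * (1 - xdecay ^ n)).
Proof.
  assert (Hs := xdecay_bounds).
  induction n as [|n IH]; simpl.
  - now replace (M0 + 32 * L0 * (1 - 1)) with M0 by ring.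
  - intros x1 x2 y; assert (h1 := IH x1 x2 y).
    assert (hc := correction_corrected_lip_x n x1 x2 y).
    set (c1 := correction _ _ _ (x1, y)) in *; set (c2 := correction _ _ _ (x2, y)) in *.
    assert (h3 := Rabs_triang (corrected n (x1, y) - corrected n (x2, y)) (c1 - c2)).
    replace (corrected n (x1, y) - corrected n (x2, y) + (c1 - c2))
      with (corrected n (x1, y) + c1 - (corrected n (x2, y) + c2)) in h3 by ring.
    assert (ha := Rabs_pos (x1 - x2)); assert (0 <= xdecay ^ n) by (apply pow_le; lra).
    assert (0 <= L0 * xdecay ^ n) by (apply Rmult_le_pos; lra).
    assert (16 * L0 * xdecay ^ n <= 32 * L0 * (xdecay ^ n - xdecay * xdecay ^ n)) by nra.
    assert (16 * L0 * xdecay ^ n * Rabs (x1 - x2) <=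
            32 * L0 * (xdecay ^ n - xdecay * xdecay ^ n) * Rabs (x1 - x2))
      by (apply Rmult_le_compat_r; auto).
    nra.
Qed.

Lemma corrected_lim_lip_x : lip_x corrected_lim (M0 + 32 * L0).
Proof.
  intros x1 x2 y; apply corrected_lim_dist_le; intros n.
  eapply Rle_trans; [apply corrected_lip_x|].
  apply Rmult_le_compat_r; [apply Rabs_pos|].
  assert (0 <= xdecay ^ n) by (apply pow_le; destruct xdecay_bounds; lra).
  assert (0 <= L0 * xdecay ^ n) by (apply Rmult_le_pos; lra); lra.
Qed.

Lemma pow_5_4_le_mv N : 5 ^ N * 4 ^ (K + N) <= mv L ^ (K + N).
Proof.
  rewrite !pow_add.
  replace (5 ^ N * (4 ^ K * 4 ^ N)) with (4 ^ K * (5 * 4) ^ N) by (rewrite Rpow_mult_distr; ring).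
  apply Rmult_le_compat; try (apply pow_le; lra); apply pow_incr; lra.
Qed.

Lemma amp0_decay_le N : 4 * amp0 * decay ^ N <= L0 * / 4 ^ (K + N).
Proof.
  assert (Hp4 : 0 < 4 ^ (K + N)) by (apply pow_lt; lra).
  assert (Hpm : 0 < mv L ^ (K + N)) by (apply pow_lt; lra).
  assert (Key := pow_5_4_le_mv N).
  replace (4 * amp0 * decay ^ N) with (L0 * (8 * (5 ^ N * 4 ^ (K + N)) / (mv L * mv L ^ (K + N)))
                                        * / 4 ^ (K + N)).
  2:{ unfold amp0, decay, Rdiv; rewrite Rpow_mult_distr, pow_inv.
      replace (K + 1)%nat with (S K) by lia; rewrite !pow_add; simpl.
      assert (mv L ^ K <> 0) by (apply pow_nonzero; lra).
      assert (mv L ^ N <> 0) by (apply pow_nonzero; lra).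
      assert (4 ^ K <> 0) by (apply pow_nonzero; lra).
      assert (4 ^ N <> 0) by (apply pow_nonzero; lra).
      field; repeat split; lra || auto. }
  apply Rmult_le_compat_r; [apply Rlt_le, Rinv_0_lt_compat; lra|].
  rewrite <- (Rmult_1_r L0) at 2; apply Rmult_le_compat_l; auto.
  apply (Rmult_le_reg_r (mv L * mv L ^ (K + N))); [nra|].
  unfold Rdiv; rewrite Rmult_assoc, Rinv_l by nra; nra.
Qed.

Lemma corrected_lim_fine_y N x y1 y2 : Rabs (y1 - y2) <= / mv L ^ (K + N) ->
  Rabs (corrected_lim (x, y1) - corrected_lim (x, y2)) <= 2 * L0 * / 4 ^ (K + N).
Proof.
  intros Hy.
  assert (Hp4 : 0 < 4 ^ (K + N)) by (apply pow_lt; lra).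
  assert (Hpm : 0 < mv L ^ (K + N)) by (apply pow_lt; lra).
  assert (Hearly : forall n, (n <= N)%nat ->
            Rabs (corrected n (x, y1) - corrected n (x, y2)) <= L0 * / 4 ^ (K + N)).
  { intros n Hn; eapply Rle_trans; [apply corrected_lip_y|].
    assert (h5 : 5 ^ n <= 5 ^ N) by (apply Rle_pow; lra || auto).
    apply Rle_trans with (L0 * 5 ^ N * / mv L ^ (K + N)).
    - apply Rmult_le_compat; auto; try apply Rabs_pos.
      + apply Rmult_le_pos; auto; apply pow_le; lra.
      + apply Rmult_le_compat_l; auto.
    - rewrite Rmult_assoc; apply Rmult_le_compat_l; auto.
      apply (Rmult_le_reg_r (mv L ^ (K + N) * 4 ^ (K + N))); [nra|].
      replace (5 ^ N * / mv L ^ (K + N) * (mv L ^ (K + N) * 4 ^ (K + N)))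
        with (5 ^ N * 4 ^ (K + N)) by (field; lra).
      replace (/ 4 ^ (K + N) * (mv L ^ (K + N) * 4 ^ (K + N))) with (mv L ^ (K + N))
        by (field; lra).
      apply pow_5_4_le_mv. }
  apply corrected_lim_dist_le; intros n.
  assert (0 <= L0 * / 4 ^ (K + N)) by (apply Rmult_le_pos; auto; apply Rlt_le, Rinv_0_lt_compat; auto).
  destruct (le_lt_dec n N) as [hn|hn]; [assert (h := Hearly n hn); lra|].
  assert (h := Hearly N (le_n N)); assert (T := amp0_decay_le N).
  assert (d1 := corrected_diff_le N n (x, y1) ltac:(lia)).
  assert (d2 := corrected_diff_le N n (x, y2) ltac:(lia)).
  apply Rabs_le; apply Rabs_le_inv in h; apply Rabs_le_inv in d1; apply Rabs_le_inv in d2; lra.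
Qed.

Variable B0 : R.
Hypotheses (B0_ge0 : 0 <= B0) (b_bounded : forall z, Rabs (b z) <= B0).

Lemma corrected_lim_cell_y i x y1 y2 : Rabs (y1 - y2) <= powerRZ (mv L) (- i) ->
  Rabs (corrected_lim (x, y1) - corrected_lim (x, y2)) <=
  (2 * L0 + (2 * B0 + 4 * amp0) * 4 ^ K) * powerRZ 4 (- i).
Proof.
  intros Hy; assert (Ha := amp0_ge0).
  set (p := powerRZ 4 (- i)); assert (Hp : 0 < p) by (apply powerRZ_lt; lra).
  assert (0 <= 2 * L0 * p) by (apply Rmult_le_pos; lra).
  assert (0 <= (2 * B0 + 4 * amp0) * 4 ^ K * p)
    by (apply Rmult_le_pos; [apply Rmult_le_pos; [|apply pow_le]|]; lra).
  rewrite Rmult_plus_distr_r.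
  destruct (Z_le_gt_dec i (Z.of_nat K)) as [Hi|Hi].
  - assert (Hq : 1 <= 4 ^ K * p).
    { unfold p; rewrite pow_powerRZ, <- powerRZ_add, powerRZ4_IZR by (lra || lia).
      apply IZR_le; assert (0 < 4 ^ (Z.of_nat K + - i))%Z by (apply Z.pow_pos_nonneg; lia); lia. }
    assert (f1 := corrected_lim_near (x, y1)); assert (f2 := corrected_lim_near (x, y2)).
    assert (g1 := b_bounded (x, y1)); assert (g2 := b_bounded (x, y2)).
    apply Rabs_le_inv in f1, f2, g1, g2.
    assert (2 * B0 + 4 * amp0 <= (2 * B0 + 4 * amp0) * (4 ^ K * p))
      by (rewrite <- (Rmult_1_r (2 * B0 + 4 * amp0)) at 1; apply Rmult_le_compat_l; lra).
    apply Rabs_le; rewrite Rmult_assoc; lra.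
  - set (N := (Z.to_nat i - K)%nat); assert (HiN : i = Z.of_nat (K + N)) by (unfold N; lia).
    assert (Ep : p = / 4 ^ (K + N))
      by (unfold p; rewrite HiN, powerRZ_neg', <- pow_powerRZ; reflexivity).
    rewrite HiN, powerRZ_neg', <- pow_powerRZ in Hy.
    assert (h := corrected_lim_fine_y N x y1 y2 Hy); rewrite <- Ep in h; lra.
Qed.

Lemma corrected_lim_cell : exists C, 0 < C /\ forall i a b' x y,
  in_cell L i a b' x -> in_cell L i a b' y ->
  Rabs (corrected_lim x - corrected_lim y) <= C * powerRZ m (- i).
Proof.
  assert (Ha := amp0_ge0); assert (H4K : 0 < 4 ^ K) by (apply pow_lt; lra).
  assert (0 <= (2 * B0 + 4 * amp0) * 4 ^ K) by (apply Rmult_le_pos; lra).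
  exists (M0 + 34 * L0 + (2 * B0 + 4 * amp0) * 4 ^ K + 1); split; [lra|].
  intros i a b' [x1 y1] [x2 y2] Hx Hy; unfold m.
  destruct (in_cell_dist L i a b' _ _ Hx Hy) as [Dx Dy]; simpl in Dx, Dy.
  set (p := powerRZ 4 (- i)) in *; assert (Hp : 0 < p) by (apply powerRZ_lt; lra).
  assert (e1 : Rabs (corrected_lim (x1, y1) - corrected_lim (x2, y1)) <= (M0 + 32 * L0) * p).
  { eapply Rle_trans; [apply corrected_lim_lip_x|]; apply Rmult_le_compat_l; lra. }
  assert (e2 := corrected_lim_cell_y i x2 y1 y2 Dy); fold p in e2.
  assert (h := Rabs_triang (corrected_lim (x1, y1) - corrected_lim (x2, y1))
                           (corrected_lim (x2, y1) - corrected_lim (x2, y2))).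
  replace (corrected_lim (x1, y1) - corrected_lim (x2, y1) +
           (corrected_lim (x2, y1) - corrected_lim (x2, y2)))
    with (corrected_lim (x1, y1) - corrected_lim (x2, y2)) in h by ring.
  nra.
Qed.

End Iteration.

(** * Separating inequivalent points *)

Lemma admissible_of_fun L (f : R2 -> R) C : 0 < C ->
  (forall u v, Rinf L u v -> f u = f v) ->
  (forall i a b x y, in_cell L i a b x -> in_cell L i a b y ->
     Rabs (f x - f y) <= C * powerRZ m (- i)) ->
  admissible L (fun u v => Rabs (f u - f v) / C).
Proof.
  intros HC Hinv Hcell; assert (HC' : 0 < / C) by (apply Rinv_0_lt_compat; auto).
  split; [split; [|split; [|split; [|split]]]|].
  - intros p p' q q' H1 H2; rewrite (Hinv _ _ H1), (Hinv _ _ H2); reflexivity.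
  - intros p q; apply Rmult_le_pos; [apply Rabs_pos|lra].
  - intros p; rewrite Rminus_diag, Rabs_R0; unfold Rdiv; ring.
  - intros p q; rewrite Rabs_minus_sym; reflexivity.
  - intros p q r; unfold Rdiv; rewrite <- Rmult_plus_distr_r.
    apply Rmult_le_compat_r; [lra|].
    replace (f p - f r) with ((f p - f q) + (f q - f r)) by ring; apply Rabs_triang.
  - intros i a b x y Hx Hy; apply (Rmult_le_reg_r C); auto.
    unfold Rdiv; rewrite Rmult_assoc, Rinv_l, Rmult_1_r, Rmult_comm by lra.
    apply Hcell with a b; auto.
Qed.

Section Bump.

Variables (r x0 Lv : R) (v : R -> R).
Hypotheses (v_range : forall y, 0 <= v y <= 1)
  (v_lip : forall y y', Rabs (v y - v y') <= Lv * Rabs (y - y')).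

Definition bump (z : R2) : R := Rmax 0 (r - Rabs (fst z - x0)) * v (snd z).

Lemma bump_weight_range x : 0 < r -> 0 <= Rmax 0 (r - Rabs (x - x0)) <= r.
Proof. intros; assert (h := Rabs_pos (x - x0)); unfold Rmax; destruct (Rle_dec _ _); lra. Qed.

Lemma bump_lip_y : 0 < r -> lip_y bump (r * Lv).
Proof.
  intros Hr x u1 u2; unfold bump; simpl.
  destruct (bump_weight_range x Hr).
  rewrite <- Rmult_minus_distr_l, Rabs_mult, Rabs_right, Rmult_assoc by lra.
  apply Rmult_le_compat; auto; apply Rabs_pos.
Qed.

Lemma bump_lip_x : lip_x bump 1.
Proof.
  intros u1 u2 y; unfold bump; simpl.
  rewrite <- Rmult_minus_distr_r, Rabs_mult, (Rabs_right (v y)) by (apply Rle_ge, v_range).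
  assert (hw := Rabs_Rmax0_dist_le r x0 u1 u2); destruct (v_range y).
  assert (h := Rabs_pos (Rmax 0 (r - Rabs (u1 - x0)) - Rmax 0 (r - Rabs (u2 - x0)))); nra.
Qed.

Lemma bump_bounded z : 0 < r -> Rabs (bump z) <= r.
Proof.
  intros Hr; unfold bump; destruct (bump_weight_range (fst z) Hr), (v_range (snd z)).
  rewrite Rabs_right by (apply Rle_ge, Rmult_le_pos; lra); nra.
Qed.

End Bump.

Section Separation.

Variable L : nat.
Hypothesis mv_ge : 300 <= mv L.

Let mv_pos : 0 < mv L.
Proof. lra. Qed.

Lemma bump_gen0_invariant (K : nat) r (v : R -> R) x0 :
  (forall k kk i, (k < Z.of_nat K)%Z -> glue_line k kk i <> x0 ->
     r <= Rabs (glue_line k kk i - x0)) ->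
  (forall k kk (l i : Z) y, (k < Z.of_nat K)%Z -> (1 <= i <= 3)%Z -> glue_line k kk i = x0 ->
     (3 * IZR l + IZR i - 1) / mv L <= y <= (3 * IZR l + IZR i) / mv L ->
     v (powerRZ (mv L) (- k) * y) = v (powerRZ (mv L) (- k) * (y + / mv L))) ->
  forall k p q, (k < Z.of_nat K)%Z -> gen0 L p q ->
  bump r x0 v (Phi_pow L k p) = bump r x0 v (Phi_pow L k q).
Proof.
  intros Hgap Hwin k p q Hk Hg.
  destruct (Phi_pow_gen0 L k p q Hg) as [kk [l [i [Hi [Hy [Ep Eq]]]]]].
  rewrite Ep, Eq; unfold bump; simpl.
  destruct (Req_dec (glue_line k kk i) x0) as [E|E]; [rewrite (Hwin k kk l i (snd p)); auto|].
  assert (h := Hgap k kk i Hk E).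
  replace (Rmax 0 (r - Rabs (glue_line k kk i - x0))) with 0; [ring|].
  unfold Rmax; destruct (Rle_dec _ _); lra.
Qed.

(* The corrections at the levels from K on move the bump by less than half of
   its height r * v y1 at (x0, y1). *)
Lemma separate_by_profile (K : nat) r Lv (v : R -> R) x0 y0 y1 :
  0 < r -> 0 <= Lv ->
  (forall y y', Rabs (v y - v y') <= Lv * Rabs (y - y')) ->
  (forall y, 0 <= v y <= 1) -> v y0 = 0 -> 8 * Lv / mv L ^ (K + 1) < v y1 ->
  (forall k kk i, (k < Z.of_nat K)%Z -> glue_line k kk i <> x0 ->
     r <= Rabs (glue_line k kk i - x0)) ->
  (forall k kk (l i : Z) y, (k < Z.of_nat K)%Z -> (1 <= i <= 3)%Z -> glue_line k kk i = x0 ->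
     (3 * IZR l + IZR i - 1) / mv L <= y <= (3 * IZR l + IZR i) / mv L ->
     v (powerRZ (mv L) (- k) * y) = v (powerRZ (mv L) (- k) * (y + / mv L))) ->
  exists d, admissible L d /\ 0 < d (x0, y0) (x0, y1).
Proof.
  intros Hr HLv Hvl Hv01 Hv0 Hbig Hgap Hwin.
  set (b := bump r x0 v).
  assert (HbY := bump_lip_y r x0 Lv v Hvl Hr); fold b in HbY.
  assert (HL0 : 0 <= r * Lv) by nra.
  assert (Hbc := bump_gen0_invariant K r v x0 Hgap Hwin).
  set (f := corrected_lim L K b).
  assert (Hinv : forall u w, Rinf L u w -> f u = f w)
    by (apply Rinf_invariant, (corrected_lim_gen0_invariant L K b (r * Lv)); auto).
  destruct (corrected_lim_cell L K b (r * Lv) mv_ge HL0 HbY 1 ltac:(lra)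
              (bump_lip_x r x0 v Hv01) r ltac:(lra) (fun z => bump_bounded r x0 v Hv01 z Hr))
    as [C [HC Hcell]].
  exists (fun u w => Rabs (f u - f w) / C); split; [apply admissible_of_fun; auto|].
  apply Rdiv_lt_0_compat; auto.
  assert (n0 := corrected_lim_near L K b (r * Lv) mv_ge HL0 HbY (x0, y0)).
  assert (n1 := corrected_lim_near L K b (r * Lv) mv_ge HL0 HbY (x0, y1)).
  replace (b (x0, y0)) with 0 in n0 by (unfold b, bump; simpl; rewrite Hv0; ring).
  replace (b (x0, y1)) with (r * v y1) in n1
    by (unfold b, bump; simpl; rewrite Rminus_diag, Rabs_R0; unfold Rmax;
        destruct (Rle_dec _ _); lra).
  fold f in n0, n1; apply Rabs_le_inv in n0, n1.
  assert (Ea : 2 * amp0 L K (r * Lv) = r * (4 * Lv / mv L ^ (K + 1))) by (unfold amp0, Rdiv; ring).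
  assert (r * (8 * Lv / mv L ^ (K + 1)) < r * v y1) by (apply Rmult_lt_compat_l; auto).
  assert (r * (8 * Lv / mv L ^ (K + 1)) = 2 * (r * (4 * Lv / mv L ^ (K + 1)))) by (unfold Rdiv; ring).
  rewrite Rabs_left1; lra.
Qed.

Lemma choose_level (X : R) (k0 : Z) :
  exists K : nat, 8 * X / mv L ^ (K + 1) < 1 /\ (k0 < Z.of_nat K)%Z.
Proof.
  destruct (pow_unbounded (mv L) (8 * X) ltac:(lra)) as [N HN].
  exists (Nat.max N (Z.to_nat (k0 + 1))); split; [|lia].
  assert (h := HN (Nat.max N (Z.to_nat (k0 + 1)) + 1)%nat ltac:(lia)).
  assert (0 < mv L ^ (Nat.max N (Z.to_nat (k0 + 1)) + 1)) by (apply pow_lt; lra).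
  apply (Rmult_lt_reg_r (mv L ^ (Nat.max N (Z.to_nat (k0 + 1)) + 1))); auto.
  unfold Rdiv; rewrite Rmult_assoc, Rinv_l by lra; lra.
Qed.

Lemma separate_distinct_x x0 y0 x1 y1 : x0 <> x1 ->
  exists d, admissible L d /\ 0 < d (x0, y0) (x1, y1).
Proof.
  intros Ex; exists (fun u v => Rabs (fst u - fst v) / 1); split.
  - apply admissible_of_fun; [lra|apply Rinf_fst|].
    intros i a b x y Hx Hy; destruct (in_cell_dist L i a b x y Hx Hy); unfold m; lra.
  - simpl; apply Rdiv_lt_0_compat; [|lra]; apply Rabs_pos_lt; lra.
Qed.

Lemma separate_off_glue_lines x0 y0 y1 :
  ~ (exists k kk i, (1 <= i <= 3)%Z /\ glue_line k kk i = x0) -> y1 <> y0 ->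
  exists d, admissible L d /\ 0 < d (x0, y0) (x0, y1).
Proof.
  intros Hoff Hne; set (v := fun y => Rmin 1 (Rabs (y - y0))).
  assert (Hvq : 0 < v y1).
  { unfold v; assert (0 < Rabs (y1 - y0)) by (apply Rabs_pos_lt; lra).
    unfold Rmin; destruct (Rle_dec _ _); lra. }
  destruct (choose_level (1 / v y1) 0) as [K [HK _]].
  destruct (glue_line_gap K x0) as [r [Hr Hgap]].
  apply (separate_by_profile K r 1 v x0 y0 y1 Hr ltac:(lra)); auto.
  - intros y y'; unfold v; rewrite Rmult_1_l; eapply Rle_trans; [apply Rabs_Rmin1_le|].
    assert (h := Rabs_triang_inv2 (y - y0) (y' - y0)).
    replace (y - y0 - (y' - y0)) with (y - y') in h by ring.
    apply Rabs_le_inv in h; apply Rabs_le; lra.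
  - intros y; unfold v; assert (h := Rabs_pos (y - y0)); unfold Rmin; destruct (Rle_dec _ _); lra.
  - unfold v; rewrite Rminus_diag, Rabs_R0; unfold Rmin; destruct (Rle_dec _ _); lra.
  - apply (Rmult_lt_reg_r (/ v y1)); [apply Rinv_0_lt_compat; lra|].
    rewrite Rinv_r by lra; replace (8 * 1 / mv L ^ (K + 1) * / v y1) with (8 * (1 / v y1) / mv L ^ (K + 1))
      by (field; split; [lra|apply pow_nonzero; lra]); exact HK.
  - intros k kk l i y _ Hi Hx _; exfalso; apply Hoff; exists k, kk, i; auto.
Qed.

Lemma glue_step_Rinf k kk i (l : Z) t : (1 <= i <= 3)%Z -> 3 * IZR l <= t <= 3 * IZR l + 1 ->
  Rinf L (glue_line k kk i, seg_height L k * (t + IZR i - 1))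
         (glue_line k kk i, seg_height L k * (t + 1 + IZR i - 1)).
Proof.
  intros Hi Ht; apply rst_step; exists k.
  exists (IZR kk + IZR i / 4, (t + IZR i - 1) / mv L).
  exists (IZR kk + IZR i / 4, (t + IZR i - 1) / mv L + / mv L).
  split; [|split].
  - apply rst_step; exists kk, l, i; split; auto; split; [split|]; try reflexivity.
    simpl; unfold Rdiv; split; apply Rmult_le_compat_r; try (apply Rlt_le, Rinv_0_lt_compat); lra.
  - unfold Phi_pow, glue_line, m, seg_height; simpl; f_equal; field; lra.
  - unfold Phi_pow, glue_line, m, seg_height; simpl; f_equal; field; lra.
Qed.

Lemma glue_window_Rinf k kk i (l d : Z) t : (1 <= i <= 3)%Z ->
  3 * IZR l <= t <= 3 * IZR l + 2 -> 3 * IZR l <= t + IZR d <= 3 * IZR l + 2 ->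
  Rinf L (glue_line k kk i, seg_height L k * (t + IZR i - 1))
         (glue_line k kk i, seg_height L k * (t + IZR d + IZR i - 1)).
Proof.
  intros Hi Ht Htd.
  assert (Hd : (-2 <= d <= 2)%Z) by (split; apply le_IZR; simpl; lra).
  set (P := fun s => (glue_line k kk i, seg_height L k * (s + IZR i - 1))).
  assert (Hstep : forall s, 3 * IZR l <= s <= 3 * IZR l + 1 -> Rinf L (P s) (P (s + 1))).
  { intros s Hs; unfold P; replace (s + 1 + IZR i - 1) with (s + 1 + IZR i - 1) by ring.
    apply (glue_step_Rinf k kk i l s Hi Hs). }
  change (Rinf L (P t) (P (t + IZR d))).
  assert (Hc : (d = -2 \/ d = -1 \/ d = 0 \/ d = 1 \/ d = 2)%Z) by lia.
  destruct Hc as [-> | [-> | [-> | [-> | ->]]]]; simpl IZR in *.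
  - apply rst_sym; apply rst_trans with (P (t - 1)).
    + replace (t + -2) with (t - 2) by ring; replace (t - 1) with (t - 2 + 1) by ring.
      apply Hstep; lra.
    + replace t with (t - 1 + 1) at 2 by ring; apply Hstep; lra.
  - apply rst_sym; replace t with (t + -1 + 1) at 2 by ring; apply Hstep; lra.
  - rewrite Rplus_0_r; apply rst_refl.
  - apply Hstep; lra.
  - apply rst_trans with (P (t + 1)); [apply Hstep; lra|].
    replace (t + 2) with (t + 1 + 1) by ring; apply Hstep; lra.
Qed.

Lemma level_proj_eq_Rinf k kk i y0 y1 (d : Z) : (1 <= i <= 3)%Z ->
  level_proj L k i y1 = level_proj L k i y0 -> y1 - y0 = seg_height L k * IZR d ->
  Rinf L (glue_line k kk i, y0) (glue_line k kk i, y1).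
Proof.
  intros Hi Hp Hd; assert (Hh := seg_height_pos L mv_pos k).
  set (h := seg_height L k) in *; set (t0 := y0 / h - (IZR i - 1)).
  assert (E0 : y0 = h * (t0 + IZR i - 1)) by (unfold t0; field; lra).
  assert (E1 : y1 = h * (t0 + IZR d + IZR i - 1)) by (rewrite E0 in Hd; lra).
  assert (Hs : squash (t0 + IZR d) = squash t0).
  { unfold level_proj in Hp; fold h in Hp; apply (Rmult_eq_reg_l h); [|lra].
    replace (y1 / h - (IZR i - 1)) with (t0 + IZR d) in Hp by (rewrite E1; field; lra).
    fold t0 in Hp; lra. }
  destruct (squash_eq_inv _ _ Hs) as [Heq|[l [W1 W0]]].
  - replace y1 with y0 by (rewrite E0, E1, Heq; ring); apply rst_refl.
  - rewrite E0, E1; apply (glue_window_Rinf k kk i l d t0); auto.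
Qed.

(* Both summands are unchanged by the gluings of level k0 on the line, so the
   profile only vanishes at points identified with y0. *)
Definition line_profile (k0 i0 : Z) (y0 y : R) : R :=
  Rmin 1 (Rabs (level_proj L k0 i0 y - level_proj L k0 i0 y0)
          + seg_height L k0 * distZ ((y - y0) / seg_height L k0)).

Section LineProfile.

Variables (k0 i0 : Z) (y0 : R).

Let h_pos : 0 < seg_height L k0.
Proof. apply seg_height_pos; lra. Qed.

Lemma line_profile_range y : 0 <= line_profile k0 i0 y0 y <= 1.
Proof.
  unfold line_profile; assert (h1 := Rabs_pos (level_proj L k0 i0 y - level_proj L k0 i0 y0)).
  assert (h2 := distZ_ge0 ((y - y0) / seg_height L k0)).
  assert (0 <= seg_height L k0 * distZ ((y - y0) / seg_height L k0)) by nra.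
  unfold Rmin; destruct (Rle_dec _ _); lra.
Qed.

Lemma line_profile_at : line_profile k0 i0 y0 y0 = 0.
Proof.
  unfold line_profile; rewrite Rminus_diag, Rabs_R0.
  replace ((y0 - y0) / seg_height L k0) with (IZR 0) by (simpl; field; lra).
  rewrite distZ_IZR; unfold Rmin; destruct (Rle_dec _ _); lra.
Qed.

Lemma line_profile_lip y y' :
  Rabs (line_profile k0 i0 y0 y - line_profile k0 i0 y0 y') <= 4 * Rabs (y - y').
Proof.
  set (h := seg_height L k0) in *; set (P := level_proj L k0 i0).
  unfold line_profile; eapply Rle_trans; [apply Rabs_Rmin1_le|]; fold h P.
  assert (h1 := Rabs_triang_inv2 (P y - P y0) (P y' - P y0)).
  replace (P y - P y0 - (P y' - P y0)) with (P y - P y') in h1 by ring.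
  assert (h2 := level_proj_lip L mv_pos k0 i0 y y'); fold P in h2.
  assert (h3 := distZ_lip ((y - y0) / h) ((y' - y0) / h)).
  replace ((y - y0) / h - (y' - y0) / h) with ((y - y') * / h) in h3 by (field; lra).
  rewrite Rabs_mult, (Rabs_right (/ h)) in h3 by (apply Rle_ge, Rlt_le, Rinv_0_lt_compat; lra).
  assert (h4 : Rabs (h * distZ ((y - y0) / h) - h * distZ ((y' - y0) / h)) <= Rabs (y - y')).
  { rewrite <- Rmult_minus_distr_l, Rabs_mult, Rabs_right by lra.
    apply (Rmult_le_compat_l h) in h3; [|lra].
    replace (h * (Rabs (y - y') * / h)) with (Rabs (y - y')) in h3 by (field; lra); exact h3. }
  apply Rabs_le_inv in h1, h4; apply Rabs_le; lra.
Qed.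

Lemma line_profile_eq0_Rinf kk y1 : (1 <= i0 <= 3)%Z -> line_profile k0 i0 y0 y1 = 0 ->
  Rinf L (glue_line k0 kk i0, y0) (glue_line k0 kk i0, y1).
Proof.
  intros Hi H0; set (h := seg_height L k0) in *.
  assert (h1 := Rabs_pos (level_proj L k0 i0 y1 - level_proj L k0 i0 y0)).
  assert (h2 := distZ_ge0 ((y1 - y0) / h)); assert (0 <= h * distZ ((y1 - y0) / h)) by nra.
  assert (Hsum : Rabs (level_proj L k0 i0 y1 - level_proj L k0 i0 y0) + h * distZ ((y1 - y0) / h) = 0)
    by (unfold line_profile in H0; fold h in H0; unfold Rmin in H0; destruct (Rle_dec _ _); lra).
  assert (e1 : level_proj L k0 i0 y1 = level_proj L k0 i0 y0).
  { apply Rminus_diag_uniq; destruct (Req_dec (level_proj L k0 i0 y1 - level_proj L k0 i0 y0) 0)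
      as [|Hne]; auto; exfalso; apply (Rabs_no_R0 _ Hne); lra. }
  assert (e2 : distZ ((y1 - y0) / h) = 0)
    by (destruct (Rmult_integral h (distZ ((y1 - y0) / h))); lra).
  apply distZ_eq0 in e2.
  apply (level_proj_eq_Rinf k0 kk i0 y0 y1 (Int_part ((y1 - y0) / h))); auto.
  fold h; rewrite <- e2; field; lra.
Qed.

Lemma line_profile_glued (l : Z) y : (3 * IZR l + IZR i0 - 1) / mv L <= y <= (3 * IZR l + IZR i0) / mv L ->
  line_profile k0 i0 y0 (powerRZ (mv L) (- k0) * y) =
  line_profile k0 i0 y0 (powerRZ (mv L) (- k0) * (y + / mv L)).
Proof.
  intros Hy; unfold line_profile; rewrite <- (level_proj_glued L mv_pos k0 l i0 y Hy).
  replace ((powerRZ (mv L) (- k0) * (y + / mv L) - y0) / seg_height L k0)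
    with ((powerRZ (mv L) (- k0) * y - y0) / seg_height L k0 + 1).
  - rewrite distZ_add1; reflexivity.
  - unfold seg_height; field; split; [lra|apply powerRZ_NOR; lra].
Qed.

End LineProfile.

Lemma separate_on_glue_line k0 kk0 i0 y0 y1 : (1 <= i0 <= 3)%Z ->
  ~ Rinf L (glue_line k0 kk0 i0, y0) (glue_line k0 kk0 i0, y1) ->
  exists d, admissible L d /\ 0 < d (glue_line k0 kk0 i0, y0) (glue_line k0 kk0 i0, y1).
Proof.
  intros Hi Hn; set (v := line_profile k0 i0 y0); set (x0 := glue_line k0 kk0 i0) in *.
  assert (Hvq : 0 < v y1).
  { destruct (line_profile_range k0 i0 y0 y1) as [H _]; destruct (Rle_lt_or_eq_dec _ _ H); auto.
    exfalso; apply Hn, line_profile_eq0_Rinf; auto. }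
  destruct (choose_level (4 / v y1) k0) as [K [HK HkK]].
  destruct (glue_line_gap K x0) as [r [Hr Hgap]].
  apply (separate_by_profile K r 4 v x0 y0 y1 Hr ltac:(lra)); auto.
  - apply line_profile_lip.
  - apply line_profile_range.
  - apply line_profile_at.
  - apply (Rmult_lt_reg_r (/ v y1)); [apply Rinv_0_lt_compat; lra|].
    rewrite Rinv_r by lra; replace (8 * 4 / mv L ^ (K + 1) * / v y1) with (8 * (4 / v y1) / mv L ^ (K + 1))
      by (field; split; [lra|apply pow_nonzero; lra]); exact HK.
  - intros k kk l i y Hk Hi' Hx Hy; unfold x0 in Hx.
    destruct (glue_line_inj k kk i k0 kk0 i0 Hi' Hi Hx) as [-> ->].
    apply (line_profile_glued k0 i0 y0 l); auto.
Qed.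

Lemma separation p q : ~ Rinf L p q -> exists d, admissible L d /\ 0 < d p q.
Proof.
  destruct p as [x0 y0], q as [x1 y1]; intros Hn.
  destruct (Req_dec x0 x1) as [<-|Ex]; [|now apply separate_distinct_x].
  destruct (classic (exists k kk i, (1 <= i <= 3)%Z /\ glue_line k kk i = x0))
    as [[k0 [kk0 [i0 [Hi <-]]]]|Hoff].
  - now apply separate_on_glue_line.
  - apply separate_off_glue_lines; auto.
    intros ->; apply Hn, rst_refl.
Qed.

End Separation.

(** * The largest admissible pseudodistance and the sets J *)

Lemma admissible_zero L : admissible L (fun _ _ => 0).
Proof.
  split; [split; [|split; [|split; [|split]]]|]; intros; try lra.
  apply powerRZ_le; unfold m; lra.
Qed.

Lemma in_cell_exists L j z : 0 < mv L -> exists a b, in_cell L j a b z.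
Proof.
  intros Hm; destruct z as [x y].
  set (c := powerRZ m (- j)); set (c' := powerRZ (mv L) (- j)).
  assert (Hc : 0 < c) by (apply powerRZ_lt; unfold m; lra).
  assert (Hc' : 0 < c') by (apply powerRZ_lt; lra).
  exists (Int_part (x / c)), (Int_part (y / c')); unfold in_cell; fold c c'; simpl.
  destruct (Int_part_spec (x / c)) as [a1 a2], (Int_part_spec (y / c')) as [b1 b2].
  apply (Rmult_le_compat_r c) in a1; [|lra]; apply (Rmult_lt_compat_r c) in a2; [|lra].
  apply (Rmult_le_compat_r c') in b1; [|lra]; apply (Rmult_lt_compat_r c') in b2; [|lra].
  replace (x / c * c) with x in * by (field; lra); replace (y / c' * c') with y in * by (field; lra).
  lra.
Qed.

Lemma in_cell_with_origin L z : 1 < mv L ->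
  exists N : nat, exists a b, in_cell L (- Z.of_nat N) a b z /\ in_cell L (- Z.of_nat N) a b (0, 0).
Proof.
  intros Hm; destruct z as [x y].
  destruct (pow_unbounded 4 (Rabs x) ltac:(lra)) as [N1 H1].
  destruct (pow_unbounded (mv L) (Rabs y) Hm) as [N2 H2].
  set (N := Nat.max N1 N2); exists N.
  assert (h1 := H1 N ltac:(lia)); assert (h2 := H2 N ltac:(lia)).
  assert (E1 : powerRZ m (- - Z.of_nat N) = 4 ^ N)
    by (rewrite Z.opp_involutive, <- pow_powerRZ; reflexivity).
  assert (E2 : powerRZ (mv L) (- - Z.of_nat N) = mv L ^ N)
    by (rewrite Z.opp_involutive, <- pow_powerRZ; reflexivity).
  assert (hx := Rabs_le_inv x (Rabs x) (Rle_refl _)).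
  assert (hy := Rabs_le_inv y (Rabs y) (Rle_refl _)).
  exists (if Rle_dec 0 x then 0%Z else (-1)%Z), (if Rle_dec 0 y then 0%Z else (-1)%Z).
  unfold in_cell; rewrite E1, E2; simpl.
  destruct (Rle_dec 0 x), (Rle_dec 0 y); simpl IZR; lra.
Qed.

Definition admissible_values L (p q : R2) (r : R) : Prop :=
  exists d, admissible L d /\ r = d p q.

Lemma admissible_values_bound L p q : 1 < mv L -> bound (admissible_values L p q).
Proof.
  intros Hm.
  destruct (in_cell_with_origin L p Hm) as [N1 [a1 [b1 [P1 O1]]]].
  destruct (in_cell_with_origin L q Hm) as [N2 [a2 [b2 [P2 O2]]]].
  exists (powerRZ m (- - Z.of_nat N1) + powerRZ m (- - Z.of_nat N2)).
  intros r [d [[[_ [_ [_ [Hs Ht]]]] Hc] ->]].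
  assert (e1 := Hc _ _ _ _ _ P1 O1); assert (e2 := Hc _ _ _ _ _ P2 O2).
  assert (e3 := Ht p (0, 0) q); rewrite (Hs (0, 0) q) in e3; lra.
Qed.

(* The supremum of all admissible pseudodistances is again admissible. *)
Lemma dhat_exists L : 1 < mv L -> exists d, is_dhat_inf L d.
Proof.
  intros Hm.
  assert (Hzero : forall p q, admissible_values L p q 0)
    by (intros p q; exists (fun _ _ => 0); split; auto; apply admissible_zero).
  set (D := fun p q => proj1_sig (completeness (admissible_values L p q)
                                   (admissible_values_bound L p q Hm) (ex_intro _ 0 (Hzero p q)))).
  assert (HD : forall p q, is_lub (admissible_values L p q) (D p q))
    by (intros p q; unfold D; destruct (completeness _ _ _) as [x Hx]; exact Hx).
  assert (Hle : forall d p q, admissible L d -> d p q <= D p q)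
    by (intros d p q Hd; apply (HD p q); exists d; auto).
  exists D; split; [split; [split; [|split; [|split; [|split]]]|]|].
  - intros p p' q q' H1 H2; apply (is_lub_ext (admissible_values L p q) (admissible_values L p' q'));
      [|apply HD|apply HD].
    intros r; split; intros [d [Hd ->]]; exists d; split; auto;
      destruct Hd as [[Hi _] _]; [apply Hi|symmetry; apply Hi]; auto.
  - intros p q; apply (HD p q), Hzero.
  - intros p; apply Rle_antisym; [|apply (HD p p), Hzero].
    apply (HD p p); intros r [d [[[_ [_ [Hr _]]] _] ->]]; rewrite Hr; lra.
  - intros p q; apply (is_lub_ext (admissible_values L p q) (admissible_values L q p));
      [|apply HD|apply HD].
    intros r; split; intros [d [Hd ->]]; exists d; split; auto;
      destruct Hd as [[_ [_ [_ [Hs _]]]] _]; apply Hs.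
  - intros p q r; apply (HD p r); intros x [d [Hd ->]].
    assert (h1 := Hle d p q Hd); assert (h2 := Hle d q r Hd).
    destruct Hd as [[_ [_ [_ [_ Ht]]]] _]; assert (h3 := Ht p q r); lra.
  - intros i a b x y Hx Hy; apply (HD x y); intros r [d [[_ Hc] ->]]; apply (Hc i a b); auto.
  - intros d Hd p q; apply Hle; auto.
Qed.

(* Chain p0 - x - y - p1 through the two intersecting cells: x and y are identified
   in X_j, hence in X_infinity. *)
Lemma admissible_le_not_inJ L d p0 p1 j : admissible L d -> ~ inJ L p0 p1 j ->
  d p0 p1 <= 2 * powerRZ m (- j).
Proof.
  intros [[Hinv [_ [Hr [_ Ht]]]] Hc] Hj; apply NNPP in Hj.
  destruct Hj as [a0 [b0 [a1 [b1 [[x [y [Hx [Hy Hxy]]]] [[z [Hz Hzp]] [w [Hw Hwp]]]]]]]].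
  rewrite <- (Hinv z p0 w p1 Hzp Hwp).
  assert (e0 : d x y = 0)
    by (rewrite (Hinv x y y y (Rj_Rinf L j x y Hxy) (rst_refl _ _ y)); apply Hr).
  assert (e1 := Hc j a0 b0 z x Hz Hx); assert (e2 := Hc j a1 b1 y w Hy Hw).
  assert (t1 := Ht z x w); assert (t2 := Ht x y w); lra.
Qed.

Lemma inJ_iff_not_Rinf L p0 p1 : 300 <= mv L -> (exists j, inJ L p0 p1 j) <-> ~ Rinf L p0 p1.
Proof.
  intros Hm; split.
  - intros [j Hj] HR; apply Hj.
    destruct (in_cell_exists L j p0 ltac:(lra)) as [a [b Hc]].
    exists a, b, a, b; split; [|split].
    + exists p0, p0; split; [|split]; auto; apply rst_refl.
    + exists p0; split; auto; apply rst_refl.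
    + exists p0; split; auto.
  - intros Hn; destruct (separation L Hm p0 p1 Hn) as [d [Hd Hpos]].
    apply NNPP; intros Hno.
    destruct (pow_lt_1_zero (/ 4) ltac:(rewrite Rabs_right; lra) (d p0 p1 / 2) ltac:(lra))
      as [N HN].
    assert (h := HN N (le_n N)); rewrite Rabs_right in h by (apply Rle_ge, pow_le; lra).
    assert (h2 := admissible_le_not_inJ L d p0 p1 (Z.of_nat N) Hd
                    (fun H => Hno (ex_intro _ _ H))).
    unfold m in h2; rewrite powerRZ_neg', <- pow_powerRZ, <- pow_inv in h2; lra.
Qed.

Theorem mainTheorem11 (L : nat) (HL : (100 <= L)%nat) :
  (forall p0 p1 : R2, (exists j : Z, inJ L p0 p1 j) <-> ~ Rinf L p0 p1) /\
  ((exists d, is_dhat_inf L d) /\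
   (forall d, is_dhat_inf L d -> forall p q, d p q = 0 -> Rinf L p q)).
Proof.
  assert (Hm := mv_ge_300 L HL).
  split; [intros; now apply inJ_iff_not_Rinf|split; [apply dhat_exists; lra|]].
  intros d [_ Hmax] p q H0; apply NNPP; intros Hn.
  destruct (separation L Hm p q Hn) as [d' [Had Hpos]].
  assert (h := Hmax d' Had p q); lra.
Qed.
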